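(* Let $\mathcal{M}_A$ denote the set of multiway-growth-approximable functions. For every polynomial $p$ with $p\in\mathcal{M}_A$, the set $\mathcal{M}_A$ contains a function asymptotically equal (in the sense of $\Theta$) to $x\mapsto\ln(x)\cdot p(x)$.
   Context: A (string-based) multiway system is a triple $(R,s_{\text{init}},\Sigma)$ with $\Sigma$ a finite alphabet, $R$ a finite set of string replacement rules over $\Sigma$, and $s_{\text{init}}\in\Sigma^*$. Its states graph has as vertices the strings reachable from $s_{\text{init}}$, with an edge $u\to v$ if $v$ arises from $u$ by replacing one occurrence of a rule's left side by its right side. The growth function $g_M(n)$ is the number of states at shortest-path distance $n-1$ from $s_{\text{init}}$. For $h:\mathbb{N}_+\to\mathbb{N}$, $L_{\mathbb{N}}(h):\mathbb{R}_{\ge0}\to\mathbb{R}_{\ge0}$ is the polygonal chain from $(0,0)$ through the points $(n,h(n))$. A function $f:\mathbb{R}_{\ge0}\to\mathbb{R}_{\ge0}$ is multiway-growth-approximable if there is a multiway system $M$ with $f\in\Theta(L_{\mathbb{N}}(g_M))$. *)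

From Stdlib Require Import Reals Lra Lia ZArith List.
Import ListNotations.
Open Scope R_scope.

Definition word := list nat.

Definition word_over (k : nat) (w : word) : Prop :=
  forall a, In a w -> (a < k)%nat.

Record multiway := MkMultiway {
  mw_k : nat;
  mw_rules : list (word * word);
  mw_init : word
}.

Definition mw_wf (M : multiway) : Prop :=
  word_over (mw_k M) (mw_init M) /\
  forall l r, In (l, r) (mw_rules M) ->
    word_over (mw_k M) l /\ word_over (mw_k M) r.

Definition mw_step (M : multiway) (u v : word) : Prop :=
  exists l r x y, In (l, r) (mw_rules M) /\
    u = x ++ l ++ y /\ v = x ++ r ++ y.

Fixpoint reach_in (M : multiway) (n : nat) (v : word) : Prop :=
  match n with
  | O => v = mw_init M
  | S m => exists u, reach_in M m u /\ mw_step M u v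
  end.

Definition at_dist (M : multiway) (n : nat) (v : word) : Prop :=
  reach_in M n v /\ forall m, (m < n)%nat -> ~ reach_in M m v.

(* g is the growth function of M: for n >= 1, g n = number of states at
   distance n-1 (the value g 0 is irrelevant). *)
Definition is_growth (M : multiway) (g : nat -> nat) : Prop :=
  forall n, (1 <= n)%nat ->
    exists s : list word, NoDup s /\
      (forall v, In v s <-> at_dist M (n - 1) v) /\ length s = g n.

(* polygonal chain L_N(h) through (0,0) and (n, h n) for n >= 1 *)
Definition hz (h : nat -> nat) (n : nat) : R :=
  match n with O => 0 | _ => INR (h n) end.

Definition polychain (h : nat -> nat) (x : R) : R :=
  let n := Z.to_nat (Int_part x) in
  hz h n + (x - INR n) * (hz h (S n) - hz h n).

Definition BigTheta (f g : R -> R) : Prop :=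
  exists c1 c2 x0 : R, 0 < c1 /\ 0 < c2 /\
    forall x, 0 <= x -> x0 <= x -> c1 * g x <= f x /\ f x <= c2 * g x.

Definition multiway_approximable (f : R -> R) : Prop :=
  (forall x, 0 <= x -> 0 <= f x) /\
  exists (M : multiway) (g : nat -> nat),
    mw_wf M /\ is_growth M g /\ BigTheta f (polychain g).

(* real polynomials as coefficient lists (constant term first) *)
Fixpoint peval (p : list R) (x : R) : R :=
  match p with
  | [] => 0
  | a :: q => a + x * peval q x
  end.

(* Since [p >= 0], its leading coefficient [a] is positive, so
   [ln x * p x = Theta (x ^ d * ln x)] with [d = deg p]; it suffices to find,
   for every [d], a multiway system whose growth is [Theta (n ^ d * log n)].

   In the base system a head sweeps back and forth between two walls, doubling
   every cell it passes, so round [j] lasts [Theta (4 ^ j)] steps.  At the end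
   of each round the head may halt and then emits one tick per step; at
   distance [n] the halted branches of the [Theta (log n)] finished rounds are
   pairwise distinct, and together with the [O (log n)] running words they make
   up the whole sphere.  Adding a letter [a] with the rule [a -> a b] in front
   decorates every state at distance [n - k] by [b ^ k], which multiplies the
   growth by [Theta (n)]; [d] such layers give [Theta (n ^ d * log n)].  The
   polygonal chain inherits these bounds because [x ^ d * ln x] changes by a
   bounded factor over unit intervals. *)

From Stdlib Require Import Reals List.
From Stdlib Require Import Lra Lia ZArith ClassicalEpsilon.
Import ListNotations.
Open Scope R_scope.

Section Words.
Local Open Scope nat_scope.

Lemma app_cons_marker_inj {T : Type} (m : T) (A B P Q : list T) :
  A ++ m :: B = P ++ m :: Q -> ~ In m P -> ~ In m Q -> A = P /\ B = Q.
Proof.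
  revert P; induction A as [|a A IH]; intros [|p P] E HP HQ; simpl in *; inversion E; subst.
  - auto.
  - exfalso; apply HP; left; reflexivity.
  - exfalso; apply HQ; apply in_or_app; right; left; reflexivity.
  - destruct (IH P H1) as [-> ->]; auto.
Qed.

Lemma app_prefix_not_in {T : Type} (c : T) (l A y P v : list T) :
  A ++ (c :: l) ++ y = P ++ v -> ~ In c P ->
  exists x, A = P ++ x /\ v = x ++ (c :: l) ++ y.
Proof.
  revert A; induction P as [|p P IH]; intros A E HP.
  - exists A; auto.
  - destruct A as [|a A]; simpl in *; inversion E; subst.
    + exfalso; apply HP; left; reflexivity.
    + destruct (IH A H1) as [x [-> ->]]; [intro; apply HP; right; auto|].
      exists x; auto.
Qed.

Lemma NoDup_flat_map {A B} (f : A -> list B) (l : list A) :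
  NoDup l -> (forall x, In x l -> NoDup (f x)) ->
  (forall x y b, In x l -> In y l -> In b (f x) -> In b (f y) -> x = y) ->
  NoDup (flat_map f l).
Proof.
  induction l as [|a l IH]; intros Hl Hf Hd; simpl; [constructor|].
  inversion Hl; subst. apply NoDup_app.
  - apply Hf; left; auto.
  - apply IH; auto; [intros; apply Hf|intros; eapply Hd]; eauto; right; auto.
  - intros b Hb Hb'. apply in_flat_map in Hb' as [y [Hy Hb']].
    assert (a = y) by (eapply Hd; eauto; [left|right]; auto). subst. contradiction.
Qed.

Lemma length_flat_map_le {A B} (f : A -> list B) (K : nat) (l : list A) :
  (forall x, In x l -> length (f x) <= K) -> length (flat_map f l) <= length l * K.
Proof.
  induction l as [|a l IH]; intros H; simpl; auto.
  rewrite length_app. specialize (IH (fun x Hx => H x (or_intror Hx))).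
  specialize (H a (or_introl eq_refl)). lia.
Qed.

Lemma length_flat_map_ge {A B} (f : A -> list B) (K : nat) (l : list A) :
  (forall x, In x l -> K <= length (f x)) -> length l * K <= length (flat_map f l).
Proof.
  induction l as [|a l IH]; intros H; simpl; auto.
  rewrite length_app. specialize (IH (fun x Hx => H x (or_intror Hx))).
  specialize (H a (or_introl eq_refl)). lia.
Qed.

Definition listing (P : word -> Prop) (U : list word) : list word :=
  nodup (list_eq_dec Nat.eq_dec)
    (filter (fun v => if excluded_middle_informative (P v) then true else false) U).

Lemma In_listing P U v : In v (listing P U) <-> In v U /\ P v.
Proof.
  unfold listing. rewrite nodup_In, filter_In.
  destruct (excluded_middle_informative (P v)); split; intros [? ?]; auto; discriminate.
Qed.

Fixpoint words (k L : nat) : list word :=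
  match L with
  | O => [[]]
  | S L' => flat_map (fun w => map (fun c => c :: w) (seq 0 k)) (words k L')
  end.

Lemma In_words k L w : length w = L -> word_over k w -> In w (words k L).
Proof.
  revert w; induction L as [|L IH]; intros [|c w] Hl Hw; simpl in *; try lia; auto.
  apply in_flat_map. exists w. split.
  - apply IH; [lia|]. intros a Ha; apply Hw; right; auto.
  - apply in_map_iff. exists c; split; auto.
    apply in_seq. assert (c < k) by (apply Hw; left; auto). lia.
Qed.

End Words.

Section GradedSystems.
Local Open Scope nat_scope.
Variable M : multiway.

Definition graded : Prop :=
  forall l r, In (l, r) (mw_rules M) -> length r = S (length l).

Lemma reach_in_step n u v : reach_in M n u -> mw_step M u v -> reach_in M (S n) v.
Proof. simpl; eauto. Qed.

Lemma reach_in_word_over n v : mw_wf M -> reach_in M n v -> word_over (mw_k M) v.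
Proof.
  intros [Hi Hr]; revert v; induction n as [|n IH]; intros v H; simpl in H.
  - subst; auto.
  - destruct H as [u [Hu [l [r [x [y [Hin [-> ->]]]]]]]].
    apply IH in Hu. destruct (Hr _ _ Hin) as [_ Hr'].
    intros a Ha. rewrite !in_app_iff in Ha. destruct Ha as [Ha|[Ha|Ha]]; auto;
      apply Hu; rewrite !in_app_iff; auto.
Qed.

Hypothesis HM : mw_wf M.
Hypothesis HG : graded.

Lemma reach_in_length n v : reach_in M n v -> length v = length (mw_init M) + n.
Proof.
  revert v; induction n as [|n IH]; intros v H; simpl in H.
  - subst; lia.
  - destruct H as [u [Hu [l [r [x [y [Hin [-> ->]]]]]]]].
    apply IH in Hu. rewrite !length_app in *. apply HG in Hin. lia.
Qed.

Lemma at_dist_iff_reach_in n v : at_dist M n v <-> reach_in M n v.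
Proof.
  split; [intros [H _]; auto|]. intros H; split; auto. intros m Hm H'.
  apply reach_in_length in H, H'. lia.
Qed.

Definition growth (n : nat) : nat :=
  length (listing (at_dist M (n - 1)) (words (mw_k M) (length (mw_init M) + (n - 1)))).

Lemma In_growth_listing n v :
  In v (listing (at_dist M n) (words (mw_k M) (length (mw_init M) + n))) <-> reach_in M n v.
Proof.
  rewrite In_listing, at_dist_iff_reach_in. split; [tauto|]. intros H; split; auto.
  apply In_words; [apply reach_in_length|eapply reach_in_word_over]; eauto.
Qed.

Lemma growth_is_growth : is_growth M growth.
Proof.
  intros n Hn. eexists; split; [apply NoDup_nodup|split; [|reflexivity]].
  intros v. rewrite (In_growth_listing (n - 1)), at_dist_iff_reach_in. reflexivity.
Qed.

Lemma growth_le_cover (U : list word) m :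
  (forall v, reach_in M m v -> In v U) -> growth (S m) <= length U.
Proof.
  intros H. unfold growth. rewrite Nat.sub_succ, Nat.sub_0_r.
  apply NoDup_incl_length; [apply NoDup_nodup|]. intros v Hv. apply H, In_growth_listing, Hv.
Qed.

Lemma growth_ge_packing (K : list word) m : NoDup K ->
  (forall v, In v K -> reach_in M m v) -> length K <= growth (S m).
Proof.
  intros HK H. unfold growth. rewrite Nat.sub_succ, Nat.sub_0_r.
  apply NoDup_incl_length; auto. intros v Hv. apply In_growth_listing, H, Hv.
Qed.

End GradedSystems.

Definition lhs_nonempty (M : multiway) : Prop :=
  forall l r, In (l, r) (mw_rules M) -> l <> [].

Definition lift (M : multiway) : multiway :=
  MkMultiway (S (S (mw_k M))) (([mw_k M], [mw_k M; S (mw_k M)]) :: mw_rules M)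
    (mw_k M :: mw_init M).

Section Lift.
Local Open Scope nat_scope.
Variable M : multiway.

Definition lift_word (k : nat) (v : word) : word := mw_k M :: repeat (S (mw_k M)) k ++ v.

Lemma lift_wf : mw_wf M -> mw_wf (lift M).
Proof.
  intros [Hi Hr]. split.
  - intros a [<-|Ha]; simpl; [lia|]. apply Hi in Ha. lia.
  - intros l r [E|H].
    + inversion E; subst. split; intros a Ha; simpl in *; lia.
    + destruct (Hr l r H) as [H1 H2].
      split; intros a Ha; [apply H1 in Ha|apply H2 in Ha]; simpl; lia.
Qed.

Lemma lift_graded : graded M -> graded (lift M).
Proof. intros HG l r [E|H]; [inversion E; reflexivity|apply HG, H]. Qed.

Lemma lift_lhs_nonempty : lhs_nonempty M -> lhs_nonempty (lift M).
Proof. intros HL l r [E|H]; [inversion E; discriminate|eapply HL, H]. Qed.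

Lemma reach_in_lift_cons m v : reach_in M m v -> reach_in (lift M) m (mw_k M :: v).
Proof.
  revert v; induction m as [|m IH]; intros v H; simpl in H.
  - subst v. reflexivity.
  - destruct H as [u [Hu [l [r [x [y [Hin [-> ->]]]]]]]].
    apply (reach_in_step _ _ (mw_k M :: x ++ l ++ y)); [apply IH, Hu|].
    exists l, r, (mw_k M :: x), y. split; [right|split]; auto.
Qed.

Lemma reach_in_lift_word m k v : reach_in M m v -> reach_in (lift M) (m + k) (lift_word k v).
Proof.
  intros H. induction k as [|k IH]; [rewrite Nat.add_0_r; apply reach_in_lift_cons, H|].
  rewrite Nat.add_succ_r. apply (reach_in_step _ _ _ _ IH).
  exists [mw_k M], [mw_k M; S (mw_k M)], [], (repeat (S (mw_k M)) k ++ v).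
  split; [left|split]; reflexivity.
Qed.

Hypothesis HM : mw_wf M.
Hypothesis HL : lhs_nonempty M.

(* Every rule of [M] needs a letter of [M] to fire, so it never touches the
   fresh prefix of [lift_word k v]. *)
Lemma reach_in_lift_inv n w : reach_in (lift M) n w ->
  exists k v, k <= n /\ reach_in M (n - k) v /\ w = lift_word k v.
Proof.
  revert w; induction n as [|n IH]; intros w H; simpl in H.
  - exists 0, (mw_init M). subst w. repeat split; auto.
  - destruct H as [u [Hu [l [r [x [y [Hin [Hv ->]]]]]]]].
    destruct (IH u Hu) as [k [v [Hk [Hr ->]]]].
    pose proof (reach_in_word_over _ _ _ HM Hr) as Hv_over.
    unfold lift_word in Hv. destruct Hin as [E|Hin].
    + inversion E; subst l r. symmetry in Hv.
      change (x ++ [mw_k M] ++ y = [] ++ mw_k M :: (repeat (S (mw_k M)) k ++ v)) in Hv.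
      apply app_cons_marker_inj in Hv as [-> ->]; [|simpl; tauto|].
      * exists (S k), v. replace (S n - S k) with (n - k) by lia. repeat split; auto; lia.
      * rewrite in_app_iff. intros [Ha|Ha]; [apply repeat_spec in Ha|apply Hv_over in Ha]; lia.
    + destruct l as [|c l]; [exfalso; eapply HL; eauto|].
      assert (Hc : c < mw_k M) by (apply (proj1 (proj2 HM _ _ Hin)); left; reflexivity).
      change (mw_k M :: repeat (S (mw_k M)) k ++ v)
        with ((mw_k M :: repeat (S (mw_k M)) k) ++ v) in Hv.
      symmetry in Hv. apply app_prefix_not_in in Hv as [x' [-> Hv']].
      * exists k, (x' ++ r ++ y). split; [lia|split].
        -- replace (S n - k) with (S (n - k)) by lia. apply (reach_in_step _ _ _ _ Hr).
           exists (c :: l), r, x', y. auto.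
        -- unfold lift_word. rewrite <- app_assoc. reflexivity.
      * intros [Ha|Ha]; [lia|apply repeat_spec in Ha; lia].
Qed.

Lemma lift_word_inj k k' v v' : word_over (mw_k M) v -> word_over (mw_k M) v' ->
  lift_word k v = lift_word k' v' -> k = k' /\ v = v'.
Proof.
  intros Hv Hv' E.
  assert (Hcount : forall k v, word_over (mw_k M) v ->
            count_occ Nat.eq_dec (lift_word k v) (S (mw_k M)) = k).
  { clear. intros k v Hv. unfold lift_word.
    rewrite count_occ_cons_neq, count_occ_app, count_occ_repeat_eq by lia.
    rewrite (proj1 (count_occ_not_In _ _ _)); [lia|]. intros Ha. apply Hv in Ha. lia. }
  assert (k = k') as <- by (rewrite <- (Hcount k v), <- (Hcount k' v'), E; auto).
  split; auto. injection E as E. eapply app_inv_head, E.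
Qed.

Section Cover.
Variable U : nat -> list word.

Definition lift_cover (n : nat) : list word :=
  flat_map (fun k => map (lift_word k) (U (n - k))) (seq 0 (S n)).

Lemma lift_cover_spec : (forall n v, reach_in M n v -> In v (U n)) ->
  forall n v, reach_in (lift M) n v -> In v (lift_cover n).
Proof.
  intros HU n w H. apply reach_in_lift_inv in H as [k [v [Hk [Hr ->]]]].
  apply in_flat_map. exists k. split; [apply in_seq; lia|]. apply in_map, HU, Hr.
Qed.

Lemma length_lift_cover n c : (forall m, m <= n -> length (U m) <= c) ->
  length (lift_cover n) <= S n * c.
Proof.
  intros HU. unfold lift_cover. rewrite <- (length_seq (S n) 0) at 2.
  apply length_flat_map_le. intros k Hk. apply in_seq in Hk.
  rewrite length_map. apply HU. lia.
Qed.

End Cover.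

Section Packing.
Variable P : nat -> list word.
Hypothesis HP_reach : forall n v, In v (P n) -> reach_in M n v.

Definition lift_packing (n : nat) : list word :=
  flat_map (fun k => map (lift_word k) (P (n - k))) (seq 0 (S (n / 2))).

Lemma lift_packing_spec n v : In v (lift_packing n) -> reach_in (lift M) n v.
Proof.
  intros H. apply in_flat_map in H as [k [Hk H]]. apply in_seq in Hk.
  apply in_map_iff in H as [v' [<- Hv']].
  assert (n / 2 <= n) by (apply Nat.Div0.div_le_upper_bound; lia).
  replace n with (n - k + k) at 1 by lia. apply reach_in_lift_word, HP_reach, Hv'.
Qed.

Lemma lift_packing_NoDup : (forall n, NoDup (P n)) -> forall n, NoDup (lift_packing n).
Proof.
  intros HP n. apply NoDup_flat_map; [apply seq_NoDup| |].
  - intros k _. apply NoDup_map_NoDup_ForallPairs; auto.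
    intros v v' Hv Hv' E. injection E as E. eapply app_inv_head, E.
  - intros k k' w _ _ H1 H2.
    apply in_map_iff in H1 as [v [<- Hv]]. apply in_map_iff in H2 as [v' [E Hv']].
    apply HP_reach, (reach_in_word_over _ _ _ HM) in Hv, Hv'.
    symmetry. apply (lift_word_inj k' k v' v); auto.
Qed.

Lemma length_lift_packing n c : (forall m, n - n / 2 <= m <= n -> c <= length (P m)) ->
  S (n / 2) * c <= length (lift_packing n).
Proof.
  intros HP. unfold lift_packing. rewrite <- (length_seq (S (n / 2)) 0) at 1.
  apply length_flat_map_ge. intros k Hk. apply in_seq in Hk.
  rewrite length_map. apply HP. lia.
Qed.

End Packing.
End Lift.

Section BaseSystem.
Local Open Scope nat_scope.

(* Letters: [0] cell, [1] left wall, [2] right wall, [3] head sweeping right,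
   [4] head sweeping left, [5] halted head, [6] tick. *)
Definition base_rules : list (word * word) :=
  [ ([3;0], [0;0;3]); ([3;2], [4;2;2]); ([0;4], [4;0;0]);
    ([1;4], [1;1;3]); ([1;4], [1;1;5]); ([5], [5;6]) ].

(* Round [j] starts with [4 ^ j] cells: the right sweep takes [4 ^ j] steps, the
   left sweep over the doubled cells [2 * 4 ^ j], plus one turn at each wall. *)
Fixpoint round_start (j : nat) : nat :=
  match j with O => O | S j' => round_start j' + 3 * 4 ^ j' + 2 end.

Definition sweep_right j i : word :=
  repeat 1 (S j) ++ repeat 0 (2 * i) ++ 3 :: repeat 0 (4 ^ j - i) ++ repeat 2 (S j).
Definition sweep_left j i : word :=
  repeat 1 (S j) ++ repeat 0 (2 * 4 ^ j - i) ++ 4 :: repeat 0 (2 * i) ++ repeat 2 (S (S j)).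
Definition halted j s : word :=
  repeat 1 (S (S j)) ++ 5 :: repeat 6 s ++ repeat 0 (4 * 4 ^ j) ++ repeat 2 (S (S j)).

Definition M0 : multiway := MkMultiway 7 base_rules (sweep_right 0 0).

Definition base_shape n v : Prop :=
  (exists j i, i <= 4 ^ j /\ n = round_start j + i /\ v = sweep_right j i) \/
  (exists j i, i <= 2 * 4 ^ j /\ n = round_start j + 4 ^ j + 1 + i /\ v = sweep_left j i) \/
  (exists j s, n = round_start (S j) + s /\ v = halted j s).

Lemma in_infix (c : nat) x l y w : x ++ l ++ y = w -> In c l -> In c w.
Proof. intros <- H. apply in_or_app; right; apply in_or_app; left; exact H. Qed.

Ltac not_in :=
  let H := fresh in intro H;
  repeat match goal with
  | H : In _ (_ ++ _) |- _ => apply in_app_or in H; destruct H as [H|H]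
  | H : In _ (repeat _ _) |- _ => apply repeat_spec in H
  | H : In _ (_ :: _) |- _ => destruct H as [H|H]
  | H : In _ [] |- _ => destruct H
  end; try lia.

Ltac absent_letter c Hv :=
  exfalso; apply (in_infix c) in Hv; [revert Hv; not_in|simpl; tauto].

Lemma repeat_S_r {A} (c : A) n : repeat c (S n) = repeat c n ++ [c].
Proof. exact (repeat_cons n c). Qed.

Lemma repeat_SS_r {A} (c : A) n : repeat c (S (S n)) = repeat c n ++ [c; c].
Proof. replace (S (S n)) with (n + 2) by lia. apply repeat_app. Qed.

Lemma app_pair_assoc {A} (x y : list A) a b : x ++ [a; b] ++ y = (x ++ [a]) ++ b :: y.
Proof. rewrite <- app_assoc. reflexivity. Qed.

Lemma sweep_right_step j i w : i <= 4 ^ j -> mw_step M0 (sweep_right j i) w ->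
  base_shape (S (round_start j + i)) w.
Proof.
  intros Hi [l [r [x [y [Hin [Hv ->]]]]]]. symmetry in Hv.
  unfold sweep_right in Hv. rewrite (app_assoc (repeat 1 _)) in Hv.
  destruct Hin as [E|[E|[E|[E|[E|[E|[]]]]]]]; inversion E; subst l r; clear E;
    try (absent_letter 4 Hv); try (absent_letter 5 Hv).
  - change (x ++ [3;0] ++ y) with (x ++ 3 :: 0 :: y) in Hv.
    apply app_cons_marker_inj in Hv as [-> Hy]; [|not_in|not_in].
    destruct (4 ^ j - i) as [|k] eqn:Hk; simpl in Hy.
    + destruct j; discriminate.
    + inversion Hy; subst y. left. exists j, (S i). split; [lia|split; [lia|]].
      unfold sweep_right. replace (2 * S i) with (2 * i + 2) by lia.
      replace (4 ^ j - S i) with k by lia. rewrite repeat_app, <- !app_assoc. reflexivity.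
  - change (x ++ [3;2] ++ y) with (x ++ 3 :: 2 :: y) in Hv.
    apply app_cons_marker_inj in Hv as [-> Hy]; [|not_in|not_in].
    destruct (4 ^ j - i) eqn:Hk; simpl in Hy; [|discriminate].
    inversion Hy; subst. right; left. exists j, 0. split; [lia|split; [lia|]].
    unfold sweep_left. replace i with (4 ^ j) by lia.
    rewrite Nat.sub_0_r, <- !app_assoc. reflexivity.
Qed.

Lemma sweep_left_step j i w : i <= 2 * 4 ^ j -> mw_step M0 (sweep_left j i) w ->
  base_shape (S (round_start j + 4 ^ j + 1 + i)) w.
Proof.
  intros Hi [l [r [x [y [Hin [Hv ->]]]]]]. symmetry in Hv.
  unfold sweep_left in Hv. rewrite (app_assoc (repeat 1 _)) in Hv.
  destruct Hin as [E|[E|[E|[E|[E|[E|[]]]]]]]; inversion E; subst l r; clear E;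
    try (absent_letter 3 Hv); try (absent_letter 5 Hv);
    rewrite app_pair_assoc in Hv; apply app_cons_marker_inj in Hv as [Hx ->]; try not_in;
    (destruct (2 * 4 ^ j - i) as [|k] eqn:Hk;
     [rewrite app_nil_r, repeat_S_r in Hx|rewrite (repeat_S_r 0 k), app_assoc in Hx]);
    apply app_inj_tail in Hx as [-> Hc]; try discriminate.
  - right; left. exists j, (S i). split; [lia|split; [lia|]].
    unfold sweep_left. replace (2 * 4 ^ j - S i) with k by lia.
    replace (2 * S i) with (S (S (2 * i))) by lia. rewrite <- !app_assoc. reflexivity.
  - left. exists (S j), 0. split; [lia|split; [simpl; lia|]].
    unfold sweep_right. replace (4 ^ S j - 0) with (2 * i) by (simpl; lia).
    rewrite (repeat_SS_r 1), <- app_assoc. reflexivity.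
  - right; right. exists j, 0. split; [simpl; lia|].
    unfold halted. replace (4 * 4 ^ j) with (2 * i) by lia.
    rewrite (repeat_SS_r 1), <- app_assoc. reflexivity.
Qed.

Lemma halted_step j s w : mw_step M0 (halted j s) w ->
  base_shape (S (round_start (S j) + s)) w.
Proof.
  intros [l [r [x [y [Hin [Hv ->]]]]]]. symmetry in Hv. unfold halted in Hv.
  destruct Hin as [E|[E|[E|[E|[E|[E|[]]]]]]]; inversion E; subst l r; clear E;
    try (absent_letter 3 Hv); try (absent_letter 4 Hv).
  change (x ++ [5] ++ y) with (x ++ 5 :: y) in Hv.
  apply app_cons_marker_inj in Hv as [-> ->]; [|not_in|not_in].
  right; right. exists j, (S s). split; [lia|reflexivity].
Qed.

Lemma reach_in_base_shape n v : reach_in M0 n v -> base_shape n v.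
Proof.
  revert v; induction n as [|n IH]; intros v H; simpl in H.
  - left. exists 0, 0. subst v. split; [simpl; lia|split; reflexivity].
  - destruct H as [u [Hu Hs]]. apply IH in Hu.
    destruct Hu as [[j [i [Hi [-> ->]]]] | [[j [i [Hi [-> ->]]]] | [j [s [-> ->]]]]].
    + apply sweep_right_step; auto.
    + apply sweep_left_step; auto.
    + apply halted_step; auto.
Qed.

End BaseSystem.

Section BaseRuns.
Local Open Scope nat_scope.

Lemma base_step l r x y : In (l, r) base_rules -> mw_step M0 (x ++ l ++ y) (x ++ r ++ y).
Proof. intros H. exists l, r, x, y. auto. Qed.

Lemma reach_in_step_eq n u v v' : reach_in M0 n u -> mw_step M0 u v -> v = v' ->
  reach_in M0 (S n) v'.
Proof. intros H1 H2 <-. eapply reach_in_step; eauto. Qed.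

Lemma sweep_right_run j i : reach_in M0 (round_start j) (sweep_right j 0) -> i <= 4 ^ j ->
  reach_in M0 (round_start j + i) (sweep_right j i).
Proof.
  intros H0. induction i as [|i IH]; intros Hi; [rewrite Nat.add_0_r; exact H0|].
  rewrite Nat.add_succ_r. eapply (reach_in_step_eq _ _ _ _ (IH ltac:(lia))).
  - replace (sweep_right j i) with
      ((repeat 1 (S j) ++ repeat 0 (2 * i)) ++ [3; 0] ++ repeat 0 (4 ^ j - S i) ++ repeat 2 (S j)).
    + apply base_step. simpl; tauto.
    + unfold sweep_right. replace (4 ^ j - i) with (S (4 ^ j - S i)) by lia.
      rewrite <- !app_assoc. reflexivity.
  - unfold sweep_right. replace (2 * S i) with (2 * i + 2) by lia.
    rewrite repeat_app, <- !app_assoc. reflexivity.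
Qed.

Lemma sweep_left_run j i : reach_in M0 (round_start j) (sweep_right j 0) -> i <= 2 * 4 ^ j ->
  reach_in M0 (round_start j + 4 ^ j + 1 + i) (sweep_left j i).
Proof.
  intros H0. induction i as [|i IH]; intros Hi.
  - rewrite Nat.add_0_r, Nat.add_1_r.
    eapply (reach_in_step_eq _ _ _ _ (sweep_right_run j (4 ^ j) H0 (le_n _))).
    + replace (sweep_right j (4 ^ j)) with
        ((repeat 1 (S j) ++ repeat 0 (2 * 4 ^ j)) ++ [3; 2] ++ repeat 2 j).
      * apply base_step. simpl; tauto.
      * unfold sweep_right. rewrite Nat.sub_diag, <- !app_assoc. reflexivity.
    + unfold sweep_left. rewrite Nat.sub_0_r, <- !app_assoc. reflexivity.
  - rewrite Nat.add_succ_r. eapply (reach_in_step_eq _ _ _ _ (IH ltac:(lia))).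
    + replace (sweep_left j i) with ((repeat 1 (S j) ++ repeat 0 (2 * 4 ^ j - S i)) ++ [0; 4] ++
                                     repeat 0 (2 * i) ++ repeat 2 (S (S j))).
      * apply base_step. simpl; tauto.
      * unfold sweep_left. replace (2 * 4 ^ j - i) with (2 * 4 ^ j - S i + 1) by lia.
        rewrite repeat_app, <- !app_assoc. reflexivity.
    + unfold sweep_left. replace (2 * S i) with (S (S (2 * i))) by lia.
      rewrite <- !app_assoc. reflexivity.
Qed.

Lemma round_start_S j : round_start (S j) = S (round_start j + 4 ^ j + 1 + 2 * 4 ^ j).
Proof. simpl. lia. Qed.

Lemma sweep_left_end j : sweep_left j (2 * 4 ^ j) =
  repeat 1 j ++ [1; 4] ++ repeat 0 (2 * (2 * 4 ^ j)) ++ repeat 2 (S (S j)).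
Proof. unfold sweep_left. rewrite Nat.sub_diag, (repeat_S_r 1), <- !app_assoc. reflexivity. Qed.

Lemma reach_round_start j : reach_in M0 (round_start j) (sweep_right j 0).
Proof.
  induction j as [|j IH]; [reflexivity|]. rewrite round_start_S.
  eapply (reach_in_step_eq _ _ _ _ (sweep_left_run j _ IH (le_n _))).
  - rewrite sweep_left_end. apply (base_step [1; 4] [1; 1; 3]). simpl; tauto.
  - unfold sweep_right. replace (4 ^ S j - 0) with (2 * (2 * 4 ^ j)) by (simpl; lia).
    rewrite (repeat_SS_r 1), <- !app_assoc. reflexivity.
Qed.

Lemma reach_halted j s : reach_in M0 (round_start (S j) + s) (halted j s).
Proof.
  induction s as [|s IH].
  - rewrite Nat.add_0_r, round_start_S.
    eapply (reach_in_step_eq _ _ _ _ (sweep_left_run j _ (reach_round_start j) (le_n _))).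
    + rewrite sweep_left_end. apply (base_step [1; 4] [1; 1; 5]). simpl; tauto.
    + unfold halted. replace (4 * 4 ^ j) with (2 * (2 * 4 ^ j)) by lia.
      rewrite (repeat_SS_r 1), <- !app_assoc. reflexivity.
  - rewrite Nat.add_succ_r. eapply (reach_in_step_eq _ _ _ _ IH); [|reflexivity].
    apply (base_step [5] [5; 6] (repeat 1 (S (S j)))). simpl; tauto.
Qed.

End BaseRuns.

Section BaseCounting.
Local Open Scope nat_scope.

Lemma M0_wf : mw_wf M0.
Proof.
  split.
  - intros a Ha. simpl in *. unfold sweep_right in Ha. simpl in Ha. lia.
  - intros l r H. simpl in H. repeat destruct H as [H|H]; try inversion H; subst;
      split; intros a Ha; simpl in *; lia.
Qed.

Lemma M0_graded : graded M0.
Proof. intros l r H. simpl in H. repeat destruct H as [H|H]; inversion H; reflexivity. Qed.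

Lemma M0_lhs_nonempty : lhs_nonempty M0.
Proof. intros l r H. simpl in H. repeat destruct H as [H|H]; inversion H; discriminate. Qed.

Lemma pow4_le_round_start j : 4 ^ j <= round_start j + 1.
Proof. induction j as [|j IH]; [simpl; lia|]. rewrite round_start_S, Nat.pow_succ_r'. lia. Qed.

Lemma round_start_le j : round_start j <= 2 * 4 ^ j.
Proof.
  induction j as [|j IH]; [simpl; lia|]. rewrite round_start_S, Nat.pow_succ_r'.
  assert (4 ^ j <> 0) by (apply Nat.pow_nonzero; lia). lia.
Qed.

Lemma round_lt_log2 j n : round_start j <= n -> j < Nat.log2 n + 2.
Proof.
  intros H. pose proof (pow4_le_round_start j) as H4.
  assert (2 ^ j <= 4 ^ j) by (apply Nat.pow_le_mono_l; lia).
  assert (Hj : j <= Nat.log2 (S n)) by (apply Nat.log2_le_pow2; lia).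
  pose proof (Nat.log2_succ_le n). lia.
Qed.

Definition cover0 (n : nat) : list word :=
  flat_map (fun j => [sweep_right j (n - round_start j);
                      sweep_left j (n - round_start j - 4 ^ j - 1);
                      halted j (n - round_start (S j))])
    (seq 0 (Nat.log2 n + 2)).

Lemma cover0_spec n v : reach_in M0 n v -> In v (cover0 n).
Proof.
  intros H. apply reach_in_base_shape in H. apply in_flat_map.
  destruct H as [[j [i [Hi [Hn ->]]]] | [[j [i [Hi [Hn ->]]]] | [j [s [Hn ->]]]]];
    exists j; (split; [apply in_seq; split; [lia|]; apply round_lt_log2|]).
  - lia.
  - left. f_equal. lia.
  - lia.
  - right; left. f_equal. lia.
  - rewrite round_start_S in Hn. lia.
  - right; right; left. f_equal. lia.
Qed.

Lemma length_cover0 n : length (cover0 n) = 3 * (Nat.log2 n + 2).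
Proof.
  unfold cover0. rewrite (flat_map_constant_length (c := 3)); [|reflexivity].
  rewrite length_seq. lia.
Qed.

Definition packing0 (n : nat) : list word :=
  map (fun j => halted j (n - round_start (S j))) (seq 0 (Nat.log2 n / 2 - 1)).

Lemma count_walls_halted j s : count_occ Nat.eq_dec (halted j s) 2 = S (S j).
Proof.
  unfold halted. rewrite !count_occ_app, count_occ_cons_neq, !count_occ_app by lia.
  rewrite (count_occ_repeat_eq _ (x := 2) (y := 2)), !count_occ_repeat_neq by lia. lia.
Qed.

Lemma packing0_NoDup n : NoDup (packing0 n).
Proof.
  apply NoDup_map_NoDup_ForallPairs; [|apply seq_NoDup].
  intros a b _ _ H. apply (f_equal (fun w => count_occ Nat.eq_dec w 2)) in H.
  rewrite !count_walls_halted in H. lia.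
Qed.

Lemma length_packing0 n : length (packing0 n) = Nat.log2 n / 2 - 1.
Proof. unfold packing0. rewrite length_map, length_seq. reflexivity. Qed.

Lemma packing0_spec n v : In v (packing0 n) -> reach_in M0 n v.
Proof.
  intros H. apply in_map_iff in H as [j [<- Hj]]. apply in_seq in Hj.
  assert (round_start (S j) <= n).
  { pose proof (round_start_le (S j)) as Hr.
    assert (Hn : 0 < n) by (destruct n; [simpl in Hj; lia|lia]).
    pose proof (Nat.log2_spec n Hn) as [Hlog _].
    assert (2 * (Nat.log2 n / 2) <= Nat.log2 n) by apply Nat.Div0.mul_div_le.
    assert (2 ^ (2 * S j + 1) <= 2 ^ Nat.log2 n) by (apply Nat.pow_le_mono_r; lia).
    rewrite Nat.pow_add_r, Nat.pow_mul_r in *. simpl in *. lia. }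
  replace n with (round_start (S j) + (n - round_start (S j))) at 1 by lia.
  apply reach_halted.
Qed.

End BaseCounting.

Section Tower.
Local Open Scope nat_scope.

Definition tower (d : nat) : multiway := Nat.iter d lift M0.

Lemma tower_wf d : mw_wf (tower d).
Proof. induction d as [|d IH]; [exact M0_wf|exact (lift_wf _ IH)]. Qed.

Lemma tower_graded d : graded (tower d).
Proof. induction d as [|d IH]; [exact M0_graded|exact (lift_graded _ IH)]. Qed.

Lemma tower_lhs_nonempty d : lhs_nonempty (tower d).
Proof. induction d as [|d IH]; [exact M0_lhs_nonempty|exact (lift_lhs_nonempty _ IH)]. Qed.

Fixpoint tower_cover (d : nat) : nat -> list word :=
  match d with O => cover0 | S d' => lift_cover (tower d') (tower_cover d') end.

Fixpoint tower_packing (d : nat) : nat -> list word :=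
  match d with O => packing0 | S d' => lift_packing (tower d') (tower_packing d') end.

Lemma tower_cover_spec d n v : reach_in (tower d) n v -> In v (tower_cover d n).
Proof.
  revert n v; induction d as [|d IH]; [exact cover0_spec|].
  apply lift_cover_spec; [apply tower_wf|apply tower_lhs_nonempty|exact IH].
Qed.

Lemma tower_packing_spec d n v : In v (tower_packing d n) -> reach_in (tower d) n v.
Proof.
  revert n v; induction d as [|d IH]; [exact packing0_spec|]. exact (lift_packing_spec _ _ IH).
Qed.

Lemma tower_packing_NoDup d n : NoDup (tower_packing d n).
Proof.
  revert n; induction d as [|d IH]; [exact packing0_NoDup|].
  apply lift_packing_NoDup; [apply tower_wf|exact (tower_packing_spec d)|exact IH].
Qed.

Definition cover_size (d n : nat) : nat := (n + 1) ^ d * (3 * (Nat.log2 n + 2)).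

Definition packing_size (d n : nat) : nat :=
  (n / 2 ^ d) ^ d * (Nat.log2 (n / 2 ^ d) / 2 - 1).

Lemma cover_size_mono d n m : n <= m -> cover_size d n <= cover_size d m.
Proof.
  intros H. unfold cover_size. apply Nat.mul_le_mono; [apply Nat.pow_le_mono_l; lia|].
  pose proof (Nat.log2_le_mono _ _ H). lia.
Qed.

Lemma packing_size_mono d n m : n <= m -> packing_size d n <= packing_size d m.
Proof.
  intros H. unfold packing_size.
  assert (Hq : n / 2 ^ d <= m / 2 ^ d) by (apply Nat.Div0.div_le_mono, H).
  apply Nat.mul_le_mono; [apply Nat.pow_le_mono_l, Hq|].
  pose proof (Nat.Div0.div_le_mono _ _ 2 (Nat.log2_le_mono _ _ Hq)). lia.
Qed.

Lemma length_tower_cover d n : length (tower_cover d n) <= cover_size d n.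
Proof.
  revert n; induction d as [|d IH]; intros n.
  - rewrite length_cover0. unfold cover_size. rewrite Nat.pow_0_r. lia.
  - eapply Nat.le_trans; [apply (length_lift_cover _ _ _ (cover_size d n))|].
    + intros m Hm. eapply Nat.le_trans; [apply IH|apply cover_size_mono, Hm].
    + unfold cover_size. simpl. lia.
Qed.

Lemma packing_size_S d n : packing_size (S d) n <= S (n / 2) * packing_size d (n / 2).
Proof.
  unfold packing_size. rewrite (Nat.pow_succ_r' 2 d), <- Nat.Div0.div_div.
  set (q := n / 2 / 2 ^ d). rewrite Nat.pow_succ_r'. set (X := q ^ d * (Nat.log2 q / 2 - 1)).
  assert (q <= n / 2) by (apply Nat.Div0.div_le_upper_bound; pose proof (Nat.pow_nonzero 2 d); nia).
  replace (q * q ^ d * (Nat.log2 q / 2 - 1)) with (q * X) by (unfold X; lia). nia.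
Qed.

Lemma length_tower_packing d n : packing_size d n <= length (tower_packing d n).
Proof.
  revert n; induction d as [|d IH]; intros n.
  - rewrite length_packing0. unfold packing_size. rewrite Nat.div_1_r. simpl. lia.
  - eapply Nat.le_trans; [apply packing_size_S|].
    apply length_lift_packing. intros m Hm. eapply Nat.le_trans; [|apply IH].
    apply packing_size_mono. pose proof (Nat.Div0.mul_div_le n 2). lia.
Qed.

Lemma growth_tower_bounds d m :
  packing_size d m <= growth (tower d) (S m) <= cover_size d m.
Proof.
  split.
  - eapply Nat.le_trans; [apply length_tower_packing|].
    apply growth_ge_packing; [apply tower_wf|apply tower_graded|apply tower_packing_NoDup|].
    apply tower_packing_spec.
  - eapply Nat.le_trans; [|apply length_tower_cover].
    apply growth_le_cover; [apply tower_wf|apply tower_graded|]. apply tower_cover_spec.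
Qed.

End Tower.

Section TowerGrowth.
Local Open Scope nat_scope.

Lemma growth_tower_upper d N : 2 <= N -> growth (tower d) N <= 9 * (N ^ d * Nat.log2 N).
Proof.
  intros HN. destruct N as [|m]; [lia|].
  eapply Nat.le_trans; [apply growth_tower_bounds|]. unfold cover_size.
  assert (1 <= Nat.log2 (S m)) by (apply Nat.log2_le_pow2; simpl; lia).
  assert (Nat.log2 m <= Nat.log2 (S m)) by (apply Nat.log2_le_mono; lia).
  rewrite Nat.add_1_r. nia.
Qed.

(* With [q := m / 2 ^ d] we have [m + 1 <= q * 2 ^ (d + 1)], and the threshold
   makes [Nat.log2 q] large enough to absorb the additive losses. *)
Lemma growth_tower_lower d N : 2 ^ d * 2 ^ (d + 6) < N ->
  N ^ d * Nat.log2 N <= 8 * 2 ^ ((d + 1) * d) * growth (tower d) N.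
Proof.
  intros HN. destruct N as [|m]; [lia|].
  eapply Nat.le_trans; [|apply Nat.mul_le_mono_l, growth_tower_bounds].
  unfold packing_size. set (q := m / 2 ^ d).
  assert (Hp : 2 ^ d <> 0) by (apply Nat.pow_nonzero; lia).
  assert (Hq : 2 ^ (d + 6) <= q) by (apply Nat.div_le_lower_bound; auto; lia).
  assert (Hq1 : 1 <= q) by (pose proof (Nat.pow_nonzero 2 (d + 6)); lia).
  assert (HL : d + 6 <= Nat.log2 q) by (apply Nat.log2_le_pow2; lia).
  assert (Hm : S m <= q * 2 ^ (d + 1)).
  { assert (m < (q + 1) * 2 ^ d).
    { pose proof (Nat.div_mod m (2 ^ d) Hp). pose proof (Nat.mod_upper_bound m (2 ^ d) Hp).
      fold q in H. nia. }
    rewrite Nat.pow_add_r. simpl. nia. }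
  assert (Hpow : S m ^ d <= 2 ^ ((d + 1) * d) * q ^ d).
  { eapply Nat.le_trans; [apply Nat.pow_le_mono_l, Hm|].
    rewrite Nat.pow_mul_l, Nat.pow_mul_r. lia. }
  assert (Hlog : Nat.log2 (S m) <= Nat.log2 q + (d + 1)).
  { eapply Nat.le_trans; [apply Nat.log2_le_mono, Hm|]. rewrite Nat.log2_mul_pow2; lia. }
  set (L := Nat.log2 q) in *.
  assert (HL2 : Nat.log2 (S m) <= 8 * (L / 2 - 1)).
  { pose proof (Nat.div_mod L 2 ltac:(lia)). pose proof (Nat.mod_upper_bound L 2 ltac:(lia)). lia. }
  eapply Nat.le_trans; [apply Nat.mul_le_mono; [exact Hpow|exact HL2]|]. nia.
Qed.

End TowerGrowth.

Lemma BigTheta_refl (f : R -> R) : BigTheta f f.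
Proof. exists 1, 1, 0. repeat split; lra. Qed.

Lemma BigTheta_sym (f g : R -> R) : BigTheta f g -> BigTheta g f.
Proof.
  intros [c1 [c2 [x0 [Hc1 [Hc2 H]]]]]. exists (/ c2), (/ c1), x0.
  split; [apply Rinv_0_lt_compat, Hc2|split; [apply Rinv_0_lt_compat, Hc1|]].
  intros x Hx Hx0. destruct (H x Hx Hx0) as [H1 H2]. split.
  - apply (Rmult_le_reg_l c2); [exact Hc2|]. rewrite <- Rmult_assoc, Rinv_r; lra.
  - apply (Rmult_le_reg_l c1); [exact Hc1|]. rewrite <- Rmult_assoc, Rinv_r; lra.
Qed.

Lemma BigTheta_trans (f g h : R -> R) : BigTheta f g -> BigTheta g h -> BigTheta f h.
Proof.
  intros [c1 [c2 [x0 [Hc1 [Hc2 H]]]]] [d1 [d2 [y0 [Hd1 [Hd2 H']]]]].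
  exists (c1 * d1), (c2 * d2), (Rmax x0 y0).
  split; [nra|split; [nra|]]. intros x Hx Hx0.
  destruct (H x Hx (Rle_trans _ _ _ (Rmax_l _ _) Hx0)) as [H1 H2].
  destruct (H' x Hx (Rle_trans _ _ _ (Rmax_r _ _) Hx0)) as [H3 H4].
  split; rewrite Rmult_assoc.
  - apply (Rle_trans _ (c1 * g x)); [apply Rmult_le_compat_l|]; lra.
  - apply (Rle_trans _ (c2 * g x)); [|apply Rmult_le_compat_l]; lra.
Qed.

Lemma BigTheta_mul_l (h f g : R -> R) (x1 : R) : (forall x, x1 <= x -> 0 <= h x) ->
  BigTheta f g -> BigTheta (fun x => h x * f x) (fun x => h x * g x).
Proof.
  intros Hh [c1 [c2 [x0 [Hc1 [Hc2 H]]]]]. exists c1, c2, (Rmax x0 x1).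
  split; [exact Hc1|split; [exact Hc2|]]. intros x Hx Hx0.
  destruct (H x Hx (Rle_trans _ _ _ (Rmax_l _ _) Hx0)) as [H1 H2].
  pose proof (Hh x (Rle_trans _ _ _ (Rmax_r _ _) Hx0)) as Hhx.
  split; nra.
Qed.

Lemma Int_part_floor x : 0 <= x ->
  INR (Z.to_nat (Int_part x)) <= x < INR (Z.to_nat (Int_part x)) + 1.
Proof.
  intros Hx. destruct (base_Int_part x) as [H1 H2].
  assert (Hz : (0 <= Int_part x)%Z).
  { destruct (Z_lt_le_dec (Int_part x) 0) as [l|l]; auto.
    assert (IZR (Int_part x) <= -1) by (apply IZR_le; lia). lra. }
  rewrite INR_IZR_INZ, Z2Nat.id by exact Hz. lra.
Qed.

Lemma polychain_convex h x : 0 <= x ->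
  let n := Z.to_nat (Int_part x) in let t := x - INR n in
  0 <= t < 1 /\ polychain h x = (1 - t) * hz h n + t * hz h (S n).
Proof.
  intros Hx n t. pose proof (Int_part_floor x Hx). split; [unfold t, n; lra|].
  unfold polychain. fold n. fold t. ring.
Qed.

Lemma polychain_nonneg h x : 0 <= x -> 0 <= polychain h x.
Proof.
  intros Hx. destruct (polychain_convex h x Hx) as [Ht ->].
  assert (Hz : forall n, 0 <= hz h n) by (intros [|n]; simpl; [lra|apply pos_INR]).
  pose proof (Hz (Z.to_nat (Int_part x))). pose proof (Hz (S (Z.to_nat (Int_part x)))). nra.
Qed.

Lemma polychain_theta (G : R -> R) (h : nat -> nat) (K c1 c2 : R) (N0 : nat) :
  0 < c1 -> 0 < c2 -> 0 < K -> (1 <= N0)%nat ->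
  (forall x y, INR N0 <= x -> x <= y -> G x <= G y) ->
  (forall y, INR N0 <= y -> G (y + 1) <= K * G y) ->
  (forall N, (N0 <= N)%nat -> c1 * G (INR N) <= INR (h N) <= c2 * G (INR N)) ->
  BigTheta (polychain h) G.
Proof.
  intros Hc1 Hc2 HK HN0 Hmono Hstep Hh.
  exists (c1 / K), (c2 * K), (INR N0 + 1).
  split; [apply Rdiv_lt_0_compat; lra|split; [nra|]]. intros x Hx Hx0.
  pose proof (Int_part_floor x Hx) as Hf.
  destruct (polychain_convex h x Hx) as [Ht ->].
  set (n := Z.to_nat (Int_part x)) in *. set (t := x - INR n) in *.
  assert (HnN : (N0 <= n)%nat) by (destruct (le_lt_dec N0 n) as [|l]; auto; apply lt_INR in l; lra).
  assert (HN0n : INR N0 <= INR n) by (apply le_INR, HnN).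
  replace (hz h n) with (INR (h n)) by (destruct n; [lia|reflexivity]).
  change (hz h (S n)) with (INR (h (S n))).
  destruct (Hh n HnN) as [Ha1 Ha2]. destruct (Hh (S n) ltac:(lia)) as [Hb1 Hb2].
  rewrite S_INR in Hb1, Hb2.
  pose proof (Hmono (INR n) (INR n + 1) HN0n ltac:(lra)) as M1.
  pose proof (Hmono (INR n) x HN0n ltac:(lra)) as M2.
  pose proof (Hmono x (INR n + 1) ltac:(lra) ltac:(lra)) as M3.
  pose proof (Hstep (INR n) HN0n) as S1.
  assert (INR (h n) <= c2 * G (INR n + 1)) by nra.
  assert (c1 * G (INR n) <= INR (h (S n))) by nra.
  assert (Hlo : c1 * G (INR n) <= (1 - t) * INR (h n) + t * INR (h (S n))) by nra.
  assert (Hhi : (1 - t) * INR (h n) + t * INR (h (S n)) <= c2 * G (INR n + 1)) by nra.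
  assert (HGx : G x <= K * G (INR n)) by lra.
  assert (K * G (INR n) <= K * G x) by (apply Rmult_le_compat_l; lra).
  split.
  - apply (Rmult_le_reg_l K); [exact HK|].
    replace (K * (c1 / K * G x)) with (c1 * G x) by (field; lra). nra.
  - nra.
Qed.

Definition pow_ln (d : nat) (x : R) : R := ln x * x ^ d.

Lemma ln_le x y : 0 < x -> x <= y -> ln x <= ln y.
Proof. intros Hx [H|H]; [left; apply ln_increasing; auto|subst; lra]. Qed.

Lemma ln_nonneg x : 1 <= x -> 0 <= ln x.
Proof. intros H. rewrite <- ln_1. apply ln_le; lra. Qed.

Lemma pow_ln_mono d x y : 1 <= x -> x <= y -> pow_ln d x <= pow_ln d y.
Proof.
  intros Hx Hy. apply Rmult_le_compat; [apply ln_nonneg; lra|apply pow_le; lra| |].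
  - apply ln_le; lra.
  - apply pow_incr; lra.
Qed.

Lemma pow_ln_step d y : 2 <= y -> pow_ln d (y + 1) <= 2 ^ S d * pow_ln d y.
Proof.
  intros Hy. unfold pow_ln.
  assert (H1 : (y + 1) ^ d <= 2 ^ d * y ^ d) by (rewrite <- Rpow_mult_distr; apply pow_incr; lra).
  assert (H2 : ln (y + 1) <= 2 * ln y).
  { replace (2 * ln y) with (ln (y ^ 2)) by (rewrite ln_pow by lra; simpl; lra).
    apply ln_le; simpl; nra. }
  assert (0 <= ln (y + 1)) by (apply ln_nonneg; lra).
  assert (0 <= y ^ d) by (apply pow_le; lra).
  assert (0 <= (y + 1) ^ d) by (apply pow_le; lra).
  apply (Rle_trans _ ((2 * ln y) * (2 ^ d * y ^ d))); [apply Rmult_le_compat; auto|].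
  simpl. lra.
Qed.

Lemma ln2_pos : 0 < ln 2.
Proof. rewrite <- ln_1. apply ln_increasing; lra. Qed.

Lemma log2_ln_lower (N : nat) : (1 <= N)%nat -> INR (Nat.log2 N) * ln 2 <= ln (INR N).
Proof.
  intros HN. destruct (Nat.log2_spec N ltac:(lia)) as [H _].
  apply le_INR in H. rewrite pow_INR in H. simpl INR in H. replace (1 + 1) with 2 in H by lra.
  rewrite <- ln_pow by lra. apply ln_le; [apply pow_lt; lra|exact H].
Qed.

Lemma log2_ln_upper (N : nat) : (2 <= N)%nat -> ln (INR N) <= 2 * ln 2 * INR (Nat.log2 N).
Proof.
  intros HN. destruct (Nat.log2_spec N ltac:(lia)) as [_ H].
  assert (HL : 1 <= INR (Nat.log2 N)) by (apply (le_INR 1), Nat.log2_le_pow2; simpl; lia).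
  apply lt_INR in H. rewrite pow_INR in H. simpl INR in H. replace (1 + 1) with 2 in H by lra.
  assert (ln (INR N) <= ln (2 ^ S (Nat.log2 N))) by (apply ln_le; [apply lt_0_INR; lia|lra]).
  rewrite ln_pow, S_INR in H0 by lra. pose proof ln2_pos. nra.
Qed.

Lemma pow_log2_theta_pow_ln (h : nat -> nat) (d N0 : nat) (A B : R) :
  (2 <= N0)%nat -> 0 < A -> 0 < B ->
  (forall N, (N0 <= N)%nat ->
     INR N ^ d * INR (Nat.log2 N) <= A * INR (h N) /\
     INR (h N) <= B * (INR N ^ d * INR (Nat.log2 N))) ->
  BigTheta (polychain h) (pow_ln d).
Proof.
  intros HN0 HA HB Hh. pose proof ln2_pos.
  apply (polychain_theta (pow_ln d) h (2 ^ S d) (/ (2 * ln 2 * A)) (B / ln 2) N0).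
  - apply Rinv_0_lt_compat. nra.
  - apply Rdiv_lt_0_compat; lra.
  - apply pow_lt; lra.
  - lia.
  - intros x y Hx Hxy. apply pow_ln_mono; [apply le_INR in HN0; simpl in HN0|]; lra.
  - intros y Hy. apply pow_ln_step. apply le_INR in HN0. simpl in HN0. lra.
  - intros N HN. destruct (Hh N HN) as [Hlo Hhi].
    pose proof (log2_ln_lower N ltac:(lia)). pose proof (log2_ln_upper N ltac:(lia)).
    assert (HXd : 0 <= INR N ^ d) by (apply pow_le, pos_INR).
    assert (0 <= INR (Nat.log2 N)) by apply pos_INR.
    unfold pow_ln. split.
    + apply (Rmult_le_reg_l (2 * ln 2 * A)); [nra|].
      rewrite <- Rmult_assoc, Rinv_r by nra.
      apply (Rle_trans _ (2 * ln 2 * (INR N ^ d * INR (Nat.log2 N)))); [nra|].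
      rewrite !Rmult_assoc. apply Rmult_le_compat_l; [lra|]. apply Rmult_le_compat_l; lra.
    + apply (Rle_trans _ (B * (INR N ^ d * INR (Nat.log2 N)))); [exact Hhi|].
      unfold Rdiv. rewrite Rmult_assoc. apply Rmult_le_compat_l; [lra|].
      apply (Rmult_le_reg_l (ln 2)); [lra|]. field_simplify; [nra|lra].
Qed.

Lemma tower_growth_theta d : BigTheta (polychain (growth (tower d))) (pow_ln d).
Proof.
  set (N0 := (2 ^ d * 2 ^ (d + 6) + 1)%nat).
  assert (HN0 : (2 <= N0)%nat)
    by (pose proof (Nat.pow_nonzero 2 d); pose proof (Nat.pow_nonzero 2 (d + 6)); nia).
  apply (pow_log2_theta_pow_ln _ d N0 (INR (8 * 2 ^ ((d + 1) * d))) (INR 9)); [exact HN0| | |].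
  - apply lt_0_INR. pose proof (Nat.pow_nonzero 2 ((d + 1) * d)). lia.
  - apply lt_0_INR. lia.
  - intros N HN. rewrite <- pow_INR, <- !mult_INR. split; apply le_INR.
    + apply growth_tower_lower. lia.
    + apply growth_tower_upper. lia.
Qed.

Lemma peval_zero_or_leading p : (forall x, peval p x = 0) \/
  exists q a, a <> 0 /\ forall x, peval p x = peval q x + a * x ^ length q.
Proof.
  induction p as [|c p [H|[q [a [Ha H]]]]].
  - left; reflexivity.
  - destruct (Req_dec c 0) as [->|Hc].
    + left; intros x; simpl; rewrite H; ring.
    + right; exists [], c; split; auto; intros x; simpl; rewrite H; ring.
  - right; exists (c :: q), a; split; auto; intros x; simpl; rewrite H; ring.
Qed.

Lemma peval_degree_bound q : exists A, 0 <= A /\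
  forall x, 1 <= x -> Rabs (peval q x) * x <= A * x ^ length q.
Proof.
  induction q as [|c q [A [HA H]]].
  - exists 0; split; [lra|]. intros x Hx; simpl. rewrite Rabs_R0. lra.
  - exists (Rabs c + A). split; [pose proof (Rabs_pos c); lra|].
    intros x Hx. specialize (H x Hx). simpl peval; simpl length; simpl pow.
    assert (Hp : 1 <= x ^ length q) by (apply pow_R1_Rle; lra).
    pose proof (Rabs_triang c (x * peval q x)) as Ht.
    rewrite Rabs_mult, (Rabs_right x) in Ht by lra.
    pose proof (Rabs_pos c). pose proof (Rabs_pos (peval q x)).
    assert (Rabs (c + x * peval q x) * x <= (Rabs c + x * Rabs (peval q x)) * x)
      by (apply Rmult_le_compat_r; lra).
    assert (Rabs c * x <= Rabs c * (x * x ^ length q)) by (apply Rmult_le_compat_l; nra).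
    assert (x * (Rabs (peval q x) * x) <= x * (A * x ^ length q)) by (apply Rmult_le_compat_l; lra).
    nra.
Qed.

Lemma peval_lower_order q e : 0 < e ->
  exists x0, 1 <= x0 /\ forall x, x0 <= x -> Rabs (peval q x) <= e * x ^ length q.
Proof.
  intros He. destruct (peval_degree_bound q) as [A [HA H]].
  exists (Rmax 1 (A / e)). split; [apply Rmax_l|]. intros x Hx.
  pose proof (Rmax_l 1 (A / e)). pose proof (Rmax_r 1 (A / e)).
  assert (HAx : A <= e * x).
  { apply (Rmult_le_reg_l (/ e)); [apply Rinv_0_lt_compat, He|].
    rewrite <- Rmult_assoc, Rinv_l, Rmult_1_l by lra. rewrite Rmult_comm. fold (A / e). lra. }
  assert (Hxd : 0 <= x ^ length q) by (apply pow_le; lra).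
  apply (Rmult_le_reg_r x); [lra|].
  apply (Rle_trans _ (A * x ^ length q)); [apply H; lra|]. nra.
Qed.

Lemma peval_leading_pos p q a : (forall x, 0 <= x -> 0 <= peval p x) -> a <> 0 ->
  (forall x, peval p x = peval q x + a * x ^ length q) -> 0 < a.
Proof.
  intros Hnn Ha Hp. destruct (Rtotal_order a 0) as [Hneg|[Hz|Hpos]]; [|contradiction|exact Hpos].
  destruct (peval_lower_order q (- a / 2) ltac:(lra)) as [x0 [Hx0 Hq]].
  pose proof (Hnn x0 ltac:(lra)) as H. rewrite Hp in H.
  pose proof (Hq x0 (Rle_refl _)). pose proof (Rle_abs (peval q x0)).
  assert (0 < x0 ^ length q) by (apply pow_lt; lra). nra.
Qed.

Lemma peval_theta_leading p q a : 0 < a ->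
  (forall x, peval p x = peval q x + a * x ^ length q) ->
  BigTheta (peval p) (fun x => x ^ length q).
Proof.
  intros Ha Hp. destruct (peval_lower_order q (a / 2) ltac:(lra)) as [x0 [Hx0 Hq]].
  exists (a / 2), (3 * a / 2), x0. split; [lra|split; [lra|]].
  intros x _ Hx. rewrite Hp. specialize (Hq x Hx).
  pose proof (Rle_abs (peval q x)). pose proof (Rle_abs (- peval q x)). rewrite Rabs_Ropp in *.
  split; lra.
Qed.

Theorem mainTheorem10 : forall p : list R,
  multiway_approximable (peval p) ->
  exists f : R -> R, multiway_approximable f /\
    BigTheta f (fun x => ln x * peval p x).
Proof.
  intros p Happ.
  destruct (peval_zero_or_leading p) as [Hzero|[q [a [Ha Hp]]]].
  - exists (peval p). split; [exact Happ|].
    exists 1, 1, 0. split; [lra|split; [lra|]]. intros x _ _. rewrite Hzero. lra.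
  - assert (Hapos : 0 < a) by (apply (peval_leading_pos p q a); [apply Happ|exact Ha|exact Hp]).
    set (d := length q) in *.
    exists (polychain (growth (tower d))). split.
    + split; [intros x; apply polychain_nonneg|].
      exists (tower d), (growth (tower d)).
      split; [apply tower_wf|split; [apply growth_is_growth; [apply tower_wf|apply tower_graded]|]].
      apply BigTheta_refl.
    + apply (BigTheta_trans _ (pow_ln d)); [apply tower_growth_theta|].
      apply BigTheta_sym, (BigTheta_mul_l ln _ _ 1); [apply ln_nonneg|].
      apply (peval_theta_leading p q a Hapos Hp).
Qed.
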